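(* For all integers $m\geq1$ and $n\geq0$, \[ \int_0^\infty\frac{\sum_{j=0}^{n+1}\binom{n+1}{j}L_{4m(n+1-j)}x^{2j}}{(x^4+L_{4m}x^2+1)^{n+1}}\ln x\,dx=-\binom{2n}{n}\frac{\pi}{2^{2n+1}}\Bigl(2m\sqrt5\,F_{2m(2n+1)}\ln\alpha+O_nL_{2m(2n+1)}\Bigr) \] and \[ \int_0^\infty\frac{\sum_{j=0}^{n+1}\binom{n+1}{j}F_{4m(n+1-j)}x^{2j}}{(x^4+L_{4m}x^2+1)^{n+1}}\ln x\,dx=-\binom{2n}{n}\frac{\pi}{2^{2n+1}}\Bigl(\frac{2m}{\sqrt5}L_{2m(2n+1)}\ln\alpha+O_nF_{2m(2n+1)}\Bigr). \]
   Context: $O_n=\sum_{j=1}^n\frac1{2j-1}$ ($O_0=0$). $F_n$ and $L_n$ are the Fibonacci and Lucas numbers ($F_0=0,F_1=1$, $L_0=2,L_1=1$, $u_n=u_{n-1}+u_{n-2}$), and $\alpha=(1+\sqrt5)/2$. *)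

From Stdlib Require Import Reals.
From Coquelicot Require Import Coquelicot.
Open Scope R_scope.

Fixpoint fibL (n : nat) : R * R :=
  (* returns (F_n, F_{n+1}) *)
  match n with
  | O => (0, 1)
  | S k => let (a, b) := fibL k in (b, a + b)
  end.
Definition Fib (n : nat) : R := fst (fibL n).

Fixpoint lucL (n : nat) : R * R :=
  (* returns (L_n, L_{n+1}) *)
  match n with
  | O => (2, 1)
  | S k => let (a, b) := lucL k in (b, a + b)
  end.
Definition Luc (n : nat) : R := fst (lucL n).

Fixpoint Odd_harm (n : nat) : R :=
  match n with
  | O => 0
  | S k => Odd_harm k + / (2 * INR (S k) - 1)
  end.

Definition alpha : R := (1 + sqrt 5) / 2.

From Stdlib Require Import Reals Lra Lia Factorial.
From Coquelicot Require Import Coquelicot.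
Open Scope R_scope.

(* With q = alpha^(2m), Binet's formulas give L_(4m) = q^2 + q^-2, so the denominator
   factors as (x^2 + q^2)(x^2 + q^-2), and the binomial sums in the numerators are
   (x^2 + q^2)^(n+1) +- (x^2 + q^-2)^(n+1).  Each integrand is therefore a combination of
   ln x / (x^2 + s^2)^(n+1) for s = q and s = 1/q, and everything reduces to
     int_0^oo dx / (x^2 + s^2)^(n+1)      = J_n(s) := pi C(2n,n) / (2^(2n+1) s^(2n+1)),
     int_0^oo ln x / (x^2 + s^2)^(n+1) dx = J_n(s) (ln s - O_n).
   Both follow by induction on n from the derivatives of x (x^2+s^2)^(-n-1) and
   x ln x (x^2+s^2)^(-n-1), whose boundary values vanish.  For n = 0 the antiderivatives are
   atan(x/s)/s and (ln x atan(x/s) - Ti2(x/s))/s, with Ti2 the inverse tangent integral;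
   its reflection formula Ti2(y) - Ti2(1/y) = (pi/2) ln y gives the limit at infinity. *)

Section Limits.

Context {F : (R -> Prop) -> Prop} {FF : Filter F}.

Lemma filterlim_Rplus f g a b :
  filterlim f F (locally a) -> filterlim g F (locally b) ->
  filterlim (fun x => f x + g x) F (locally (a + b)).
Proof. intros Hf Hg. exact (filterlim_comp_2 f g Rplus Hf Hg (filterlim_plus a b)). Qed.

Lemma filterlim_Rmult f g a b :
  filterlim f F (locally a) -> filterlim g F (locally b) ->
  filterlim (fun x => f x * g x) F (locally (a * b)).
Proof. intros Hf Hg. exact (filterlim_comp_2 f g Rmult Hf Hg (filterlim_mult a b)). Qed.

Lemma filterlim_Rmult_l k f a :
  filterlim f F (locally a) -> filterlim (fun x => k * f x) F (locally (k * a)).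
Proof. intros Hf. exact (filterlim_Rmult _ _ _ _ (filterlim_const k) Hf). Qed.

Lemma filterlim_Rminus f g a b :
  filterlim f F (locally a) -> filterlim g F (locally b) ->
  filterlim (fun x => f x - g x) F (locally (a - b)).
Proof.
  intros Hf Hg. apply filterlim_Rplus; [exact Hf|].
  apply (filterlim_ext (fun x => -1 * g x)); [intros; ring|].
  replace (- b) with (-1 * b) by ring. now apply filterlim_Rmult_l.
Qed.

Lemma filterlim_squeeze_0 (f g : R -> R) :
  F (fun x => 0 <= f x <= g x) -> filterlim g F (locally 0) ->
  filterlim f F (locally 0).
Proof.
  intros Hfg Hg.
  exact (filterlim_le_le (fun _ => 0) f g (Finite 0) Hfg (filterlim_const 0) Hg).
Qed.

Lemma filterlim_lim_eq (f : R -> R) (a b : R) :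
  a = b -> filterlim f F (locally a) -> filterlim f F (locally b).
Proof. now intros <-. Qed.

End Limits.

Lemma filterlim_at_right_continuous (g : R -> R) (a : R) :
  continuous g a -> filterlim g (at_right a) (locally (g a)).
Proof. apply filterlim_filter_le_1, filter_le_within. Qed.

Lemma filterlim_Rinv_pinfty : filterlim Rinv (Rbar_locally p_infty) (locally 0).
Proof. exact (is_lim_inv (fun y => y) p_infty p_infty (is_lim_id p_infty) ltac:(discriminate)). Qed.

Lemma filterlim_div_pinfty s : filterlim (fun x => s / x) (Rbar_locally p_infty) (locally 0).
Proof.
  apply (filterlim_lim_eq _ (s * 0)); [ring|].
  exact (filterlim_Rmult_l s _ _ filterlim_Rinv_pinfty).
Qed.

Lemma filterlim_div_at_right_0 s : filterlim (fun x => x / s) (at_right 0) (locally 0).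
Proof.
  apply (filterlim_lim_eq _ (0 / s)); [unfold Rdiv; ring|].
  apply (filterlim_at_right_continuous (fun x => x / s)).
  apply (ex_derive_continuous (fun x => x / s)). auto_derive. easy.
Qed.

Lemma filterlim_id_mul_ln :
  filterlim (fun x => x * ln x) (at_right 0) (locally 0).
Proof.
  apply (filterlim_ext_loc (fun x => - (ln (/ x) / / x))).
  - exists (mkposreal 1 Rlt_0_1). intros x _ Hx.
    rewrite ln_Rinv by exact Hx. unfold Rdiv. rewrite Rinv_inv. ring.
  - apply (filterlim_lim_eq _ (- 0)); [ring|].
    apply (filterlim_comp _ _ _ Rinv (fun y => - (ln y / y)) _ (Rbar_locally p_infty));
      [exact filterlim_Rinv_0_right|].
    apply (filterlim_comp _ _ _ (fun y => ln y / y) Ropp _ (locally 0)); [exact is_lim_div_ln_p|].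
    exact (filterlim_opp (V := R_NormedModule) 0).
Qed.

Lemma filter_prod_interval_pos :
  filter_prod (at_right 0) (Rbar_locally p_infty)
    (fun ab => forall x, Rmin (fst ab) (snd ab) <= x <= Rmax (fst ab) (snd ab) -> 0 < x).
Proof.
  exists (fun a => 0 < a) (fun b => 0 < b).
  - exists (mkposreal 1 Rlt_0_1). now intros.
  - now exists 0.
  - intros a b Ha Hb x Hx. apply Rlt_le_trans with (Rmin a b); [now apply Rmin_pos | apply Hx].
Qed.

Lemma is_RInt_gen_ext_pos (f g : R -> R) (l : R) :
  (forall x, 0 < x -> f x = g x) ->
  is_RInt_gen f (at_right 0) (Rbar_locally p_infty) l ->
  is_RInt_gen g (at_right 0) (Rbar_locally p_infty) l.
Proof.
  intros Hfg. apply is_RInt_gen_ext.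
  eapply filter_imp; [|exact filter_prod_interval_pos].
  intros ab Hab x Hx. apply Hfg, Hab. lra.
Qed.

Lemma is_RInt_gen_derive_pos (Fd f : R -> R) (la lb : R) :
  (forall x, 0 < x -> is_derive Fd x (f x)) ->
  (forall x, 0 < x -> continuous f x) ->
  filterlim Fd (at_right 0) (locally la) ->
  filterlim Fd (Rbar_locally p_infty) (locally lb) ->
  is_RInt_gen f (at_right 0) (Rbar_locally p_infty) (lb - la).
Proof.
  intros Hd Hc H0 Hinf.
  apply (is_RInt_gen_ext_pos (Derive Fd)).
  { intros x Hx. now apply is_derive_unique, Hd. }
  apply is_RInt_gen_Derive; try assumption.
  - eapply filter_imp; [|exact filter_prod_interval_pos].
    intros ab Hab x Hx. eexists. now apply Hd, Hab.
  - eapply filter_imp; [|exact filter_prod_interval_pos].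
    intros ab Hab x Hx. assert (Hx0 := Hab x Hx).
    apply (continuous_ext_loc _ f); [|now apply Hc].
    apply filter_imp with (fun y => 0 < y); [|now apply open_gt].
    intros y Hy. symmetry. now apply is_derive_unique, Hd.
Qed.

Lemma is_RInt_gen_derive_pos_0 (Fd f : R -> R) :
  (forall x, 0 < x -> is_derive Fd x (f x)) ->
  (forall x, 0 < x -> continuous f x) ->
  filterlim Fd (at_right 0) (locally 0) ->
  filterlim Fd (Rbar_locally p_infty) (locally 0) ->
  is_RInt_gen f (at_right 0) (Rbar_locally p_infty) 0.
Proof.
  intros Hd Hc H0 Hinf. rewrite <- (Rminus_0_r 0) at 2.
  now apply (is_RInt_gen_derive_pos Fd).
Qed.

Lemma is_derive_0_eq_at_1 (D : R -> R) :
  (forall x, 0 < x -> is_derive D x 0) -> forall y, 0 < y -> D y = D 1.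
Proof.
  intros HD y Hy.
  assert (Hpos : forall x, Rmin 1 y <= x <= Rmax 1 y -> 0 < x).
  { intros x Hx. apply Rlt_le_trans with (Rmin 1 y); [apply Rmin_pos; lra | apply Hx]. }
  destruct (MVT_gen D 1 y (fun _ => 0)) as [c [_ Hc]].
  - intros x Hx. apply HD, Hpos. lra.
  - intros x Hx. apply continuity_pt_filterlim, (ex_derive_continuous D).
    exists 0. now apply HD, Hpos.
  - lra.
Qed.

Definition atanc (t : R) : R := if Req_EM_T t 0 then 1 else atan t / t.

Lemma atanc_eq t : t <> 0 -> atanc t = atan t / t.
Proof. intros Ht. unfold atanc. now destruct (Req_EM_T t 0). Qed.

Lemma atanc_0 : atanc 0 = 1.
Proof. unfold atanc. now destruct (Req_EM_T 0 0). Qed.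

Lemma continuous_atanc t : continuous atanc t.
Proof.
  destruct (Req_EM_T t 0) as [->|Ht].
  - (* continuity at 0 says atan'(0) = 1 *)
    apply continuity_pt_filterlim. intros eps Heps.
    destruct (derivable_pt_lim_atan 0 eps Heps) as [d Hd].
    exists d. split; [apply cond_pos|]. intros y [_ Hy]. simpl in Hy |- *. unfold R_dist in Hy |- *.
    rewrite atanc_0. destruct (Req_EM_T y 0) as [->|Hy0].
    + now rewrite atanc_0, Rminus_diag, Rabs_R0.
    + rewrite Rminus_0_r in Hy. rewrite atanc_eq by exact Hy0.
      specialize (Hd y Hy0 Hy). rewrite Rplus_0_l, atan_0, Rminus_0_r in Hd.
      replace (/ (1 + 0 ^ 2)) with 1 in Hd by field. exact Hd.
  - apply (continuous_ext_loc _ (fun x => atan x / x)).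
    + apply filter_imp with (fun y => y <> 0); [|now apply open_neq].
      intros y Hy. symmetry. now apply atanc_eq.
    + apply (ex_derive_continuous (fun x => atan x / x)). auto_derive. exact Ht.
Qed.

Definition Ti2 (y : R) : R := RInt atanc 0 y.

Lemma is_derive_Ti2 y : is_derive Ti2 y (atanc y).
Proof.
  apply (is_derive_RInt atanc Ti2 0); [|apply continuous_atanc].
  apply filter_forall. intros b. apply (RInt_correct atanc).
  apply ex_RInt_continuous. intros; apply continuous_atanc.
Qed.

Lemma continuous_Ti2 y : continuous Ti2 y.
Proof. apply (ex_derive_continuous Ti2). eexists. apply is_derive_Ti2. Qed.

Lemma Ti2_0 : Ti2 0 = 0.
Proof. exact (RInt_point (V := R_CompleteNormedModule) 0 atanc). Qed.

Lemma Ti2_inv y : 0 < y -> Ti2 y - Ti2 (/ y) = PI / 2 * ln y.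
Proof.
  intros Hy.
  assert (Hderiv : forall x, 0 < x ->
            is_derive (fun x => Ti2 x - Ti2 (/ x) - PI / 2 * ln x) x 0).
  { intros x Hx.
    evar (d : R). replace 0 with d.
    - apply @is_derive_minus; [apply @is_derive_minus|].
      + apply is_derive_Ti2.
      + apply (is_derive_comp Ti2 Rinv); [apply is_derive_Ti2|].
        apply (is_derive_inv (fun y => y)); [apply is_derive_id | lra].
      + apply @is_derive_scal. now apply is_derive_ln.
    - unfold d. rewrite !atanc_eq by (try apply Rinv_neq_0_compat; lra).
      rewrite atan_inv by exact Hx.
      unfold scal, minus, plus, opp, one; simpl; unfold mult; simpl. field. lra. }
  generalize (is_derive_0_eq_at_1 _ Hderiv y Hy). rewrite Rinv_1, ln_1. lra.
Qed.

Lemma is_derive_Rmult (f g : R -> R) x df dg d :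
  is_derive f x df -> is_derive g x dg -> d = df * g x + f x * dg ->
  is_derive (fun t => f t * g t) x d.
Proof.
  intros Hf Hg ->. apply (is_derive_mult f g); auto. intros; apply Rmult_comm.
Qed.

Lemma C_central_S n :
  Binomial.C (2 * S n) (S n) = 2 * (2 * INR n + 1) / (INR n + 1) * Binomial.C (2 * n) n.
Proof.
  unfold Binomial.C.
  replace (2 * S n - S n)%nat with (S n) by lia.
  replace (2 * n - n)%nat with n by lia.
  replace (2 * S n)%nat with (S (S (2 * n))) by lia.
  change (fact (S (S (2 * n)))) with (S (S (2 * n)) * (S (2 * n) * fact (2 * n)))%nat.
  change (fact (S n)) with (S n * fact n)%nat.
  rewrite !mult_INR, !S_INR, !mult_INR.
  assert (Hn := pos_INR n). assert (Hf := INR_fact_neq_0 n). assert (Hf2 := INR_fact_neq_0 (2 * n)).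
  simpl. field. lra.
Qed.

Lemma Odd_harm_S n : Odd_harm (S n) = Odd_harm n + / (2 * INR n + 1).
Proof.
  change (Odd_harm (S n)) with (Odd_harm n + / (2 * INR (S n) - 1)).
  rewrite S_INR. f_equal. f_equal. ring.
Qed.

Definition kernel (n : nat) (s x : R) : R := / (x ^ 2 + s ^ 2) ^ S n.

Definition kernel_int (n : nat) (s : R) : R :=
  PI * Binomial.C (2 * n) n / (2 ^ (2 * n + 1) * s ^ (2 * n + 1)).

Section Kernel.

Variable s : R.
Hypothesis Hs : 0 < s.

Lemma kernel_denom_pos x : 0 < x ^ 2 + s ^ 2.
Proof. nra. Qed.

Lemma kernel_pos n x : 0 < kernel n s x.
Proof. apply Rinv_0_lt_compat, pow_lt, kernel_denom_pos. Qed.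

Lemma kernel_S n x : kernel n s x = (x ^ 2 + s ^ 2) * kernel (S n) s x.
Proof.
  unfold kernel. change ((x ^ 2 + s ^ 2) ^ S (S n)) with ((x ^ 2 + s ^ 2) * (x ^ 2 + s ^ 2) ^ S n).
  assert (0 < (x ^ 2 + s ^ 2) ^ S n) by apply pow_lt, kernel_denom_pos.
  assert (0 < x ^ 2 + s ^ 2) by apply kernel_denom_pos.
  field. lra.
Qed.

Lemma kernel_le_inv_sqr n x : 1 <= x -> kernel n s x <= / x ^ 2.
Proof.
  intros Hx. unfold kernel. apply Rinv_le_contravar; [nra|].
  apply Rle_trans with ((x ^ 2 + s ^ 2) ^ 1); [simpl; nra|].
  apply Rle_pow; [nra | lia].
Qed.

Lemma is_derive_kernel n x :
  is_derive (kernel n s) x (- 2 * (INR n + 1) * x * kernel (S n) s x).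
Proof.
  unfold kernel. assert (Hd := kernel_denom_pos x).
  assert (0 < (x ^ 2 + s ^ 2) ^ n) by now apply pow_lt.
  auto_derive.
  - simpl in *. nra.
  - change (match n with 0%nat => 1 | S _ => INR n + 1 end) with (INR (S n)).
    rewrite S_INR. change ((x ^ 2 + s ^ 2) ^ S (S n))
      with ((x ^ 2 + s ^ 2) * ((x ^ 2 + s ^ 2) * (x ^ 2 + s ^ 2) ^ n)).
    simpl in *. field. nra.
Qed.

Lemma ex_derive_kernel n x : ex_derive (kernel n s) x.
Proof. eexists. apply is_derive_kernel. Qed.

Lemma continuous_kernel n x : continuous (kernel n s) x.
Proof. apply (ex_derive_continuous (kernel n s)), ex_derive_kernel. Qed.

Lemma is_derive_id_mul_kernel n x :
  is_derive (fun x => x * kernel n s x) x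
    (kernel n s x - 2 * (INR n + 1) * x ^ 2 * kernel (S n) s x).
Proof.
  eapply is_derive_Rmult; [apply is_derive_id | now apply is_derive_kernel|].
  change (@one R_AbsRing) with 1. ring.
Qed.

Lemma is_derive_id_mul_ln_mul_kernel n x : 0 < x ->
  is_derive (fun x => x * ln x * kernel n s x) x
    (ln x * kernel n s x + kernel n s x - 2 * (INR n + 1) * x ^ 2 * ln x * kernel (S n) s x).
Proof.
  intros Hx.
  eapply is_derive_Rmult; [|now apply is_derive_kernel|].
  - eapply is_derive_Rmult; [apply is_derive_id | now apply is_derive_ln | reflexivity].
  - change (@one R_AbsRing) with 1. field. lra.
Qed.

Lemma filterlim_id_mul_kernel_0 n :
  filterlim (fun x => x * kernel n s x) (at_right 0) (locally 0).
Proof.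
  apply (filterlim_lim_eq _ (0 * kernel n s 0)); [ring|].
  apply (filterlim_at_right_continuous (fun x => x * kernel n s x)).
  apply (ex_derive_continuous (fun x => x * kernel n s x)).
  eexists. now apply is_derive_id_mul_kernel.
Qed.

Lemma filterlim_id_mul_kernel_pinfty n :
  filterlim (fun x => x * kernel n s x) (Rbar_locally p_infty) (locally 0).
Proof.
  apply (filterlim_squeeze_0 _ Rinv); [|exact filterlim_Rinv_pinfty].
  exists 1. intros x Hx. assert (Hk := kernel_pos n x).
  split; [nra|]. replace (/ x) with (x * / x ^ 2) by (field; lra).
  apply Rmult_le_compat_l; [lra | apply kernel_le_inv_sqr; lra].
Qed.

Lemma filterlim_id_mul_ln_mul_kernel_0 n :
  filterlim (fun x => x * ln x * kernel n s x) (at_right 0) (locally 0).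
Proof.
  apply (filterlim_lim_eq _ (0 * kernel n s 0)); [ring|].
  apply filterlim_Rmult; [exact filterlim_id_mul_ln|].
  apply filterlim_at_right_continuous, continuous_kernel.
Qed.

Lemma filterlim_id_mul_ln_mul_kernel_pinfty n :
  filterlim (fun x => x * ln x * kernel n s x) (Rbar_locally p_infty) (locally 0).
Proof.
  apply (filterlim_squeeze_0 _ (fun x => ln x / x)); [|exact is_lim_div_ln_p].
  exists 1. intros x Hx. assert (Hk := kernel_pos n x).
  assert (Hln : 0 < ln x) by (rewrite <- ln_1; apply ln_increasing; lra).
  split; [apply Rmult_le_pos; nra|].
  replace (ln x / x) with (x * ln x * / x ^ 2) by (field; lra).
  apply Rmult_le_compat_l; [nra | apply kernel_le_inv_sqr; lra].
Qed.

Lemma kernel_int_0 : kernel_int 0 s = PI / (2 * s).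
Proof. unfold kernel_int, Binomial.C. simpl. field. lra. Qed.

Lemma kernel_int_S n :
  kernel_int (S n) s = (2 * INR n + 1) / (2 * (INR n + 1) * s ^ 2) * kernel_int n s.
Proof.
  unfold kernel_int. rewrite C_central_S.
  replace (2 * S n + 1)%nat with (2 * n + 1 + 2)%nat by lia. rewrite !pow_add.
  assert (Hn := pos_INR n).
  assert (0 < s ^ (2 * n + 1)) by now apply pow_lt.
  assert (0 < 2 ^ (2 * n + 1)) by (apply pow_lt; lra).
  field. repeat split; try lra; apply pow_nonzero; lra.
Qed.

Lemma is_RInt_gen_kernel_0 :
  is_RInt_gen (kernel 0 s) (at_right 0) (Rbar_locally p_infty) (PI / (2 * s)).
Proof.
  replace (PI / (2 * s)) with (/ s * (PI / 2 - atan 0) - / s * atan 0)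
    by (rewrite atan_0; field; lra).
  apply (is_RInt_gen_derive_pos (fun x => / s * atan (x / s))).
  - intros x _. auto_derive; [easy|]. unfold kernel. simpl. field. nra.
  - intros x _. apply continuous_kernel.
  - apply filterlim_Rmult_l.
    eapply filterlim_comp; [apply filterlim_div_at_right_0 | apply continuous_atan].
  - apply (filterlim_ext_loc (fun x => / s * (PI / 2 - atan (s / x)))).
    + exists 0. intros x Hx. rewrite <- atan_inv by (apply Rdiv_lt_0_compat; lra).
      do 2 f_equal. field. lra.
    + apply filterlim_Rmult_l, filterlim_Rminus; [apply filterlim_const|].
      eapply filterlim_comp; [apply filterlim_div_pinfty | apply continuous_atan].
Qed.

Lemma is_RInt_gen_id_mul_kernel_derive n :
  is_RInt_gen (fun x => kernel n s x - 2 * (INR n + 1) * x ^ 2 * kernel (S n) s x)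
    (at_right 0) (Rbar_locally p_infty) 0.
Proof.
  apply (is_RInt_gen_derive_pos_0 (fun x => x * kernel n s x)).
  - intros x _. apply is_derive_id_mul_kernel.
  - intros x _. apply (ex_derive_continuous
                         (fun x => kernel n s x - 2 * (INR n + 1) * x ^ 2 * kernel (S n) s x)).
    apply (ex_derive_minus (kernel n s)); [apply ex_derive_kernel|].
    apply (ex_derive_mult (fun x => 2 * (INR n + 1) * x ^ 2) (kernel (S n) s));
      [auto_derive; easy | apply ex_derive_kernel].
  - apply filterlim_id_mul_kernel_0.
  - apply filterlim_id_mul_kernel_pinfty.
Qed.

Lemma is_RInt_gen_kernel n :
  is_RInt_gen (kernel n s) (at_right 0) (Rbar_locally p_infty) (kernel_int n s).
Proof.
  induction n as [|n IH].
  - rewrite kernel_int_0. apply is_RInt_gen_kernel_0.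
  - set (c := / (2 * (INR n + 1) * s ^ 2)).
    set (d := fun x => kernel n s x - 2 * (INR n + 1) * x ^ 2 * kernel (S n) s x).
    apply (is_RInt_gen_ext_pos (fun x => c * ((2 * INR n + 1) * kernel n s x + d x))).
    { intros x _. unfold d, c. rewrite (kernel_S n x).
      assert (Hn := pos_INR n). field. split; nra. }
    replace (kernel_int (S n) s) with (c * ((2 * INR n + 1) * kernel_int n s + 0)).
    + apply (is_RInt_gen_scal (fun x => (2 * INR n + 1) * kernel n s x + d x)).
      apply (is_RInt_gen_plus (fun x => (2 * INR n + 1) * kernel n s x) d);
        [|apply is_RInt_gen_id_mul_kernel_derive].
      now apply (is_RInt_gen_scal (kernel n s)).
    + rewrite kernel_int_S. unfold c. field. assert (Hn := pos_INR n). split; nra.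
Qed.

Lemma is_RInt_gen_ln_kernel_0 :
  is_RInt_gen (fun x => ln x * kernel 0 s x) (at_right 0) (Rbar_locally p_infty)
    (PI / (2 * s) * ln s).
Proof.
  replace (PI / (2 * s) * ln s)
    with (/ s * (PI / 2 * ln s - Ti2 0 - 0 * (s * atanc 0)) - / s * (0 * (/ s * atanc 0) - Ti2 0))
    by (rewrite Ti2_0; field; lra).
  apply (is_RInt_gen_derive_pos (fun x => / s * (ln x * atan (x / s) - Ti2 (x / s)))).
  - intros x Hx.
    evar (d : R). replace (ln x * kernel 0 s x) with d.
    + apply @is_derive_scal, @is_derive_minus.
      * auto_derive; [exact Hx | reflexivity].
      * apply (is_derive_comp Ti2 (fun x => x / s)); [apply is_derive_Ti2|].
        auto_derive; [easy | reflexivity].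
    + unfold d. rewrite atanc_eq by (apply Rgt_not_eq, Rdiv_lt_0_compat; lra).
      unfold kernel, scal, minus, plus, opp; simpl; unfold mult, Rdiv; simpl. field. nra.
  - intros x Hx. apply (ex_derive_continuous (fun x => ln x * kernel 0 s x)).
    apply (ex_derive_mult ln (kernel 0 s)); [auto_derive; exact Hx | apply ex_derive_kernel].
  - apply (filterlim_ext_loc (fun x => / s * (x * ln x * (/ s * atanc (x / s)) - Ti2 (x / s)))).
    + exists (mkposreal 1 Rlt_0_1). intros x _ Hx.
      rewrite atanc_eq by (apply Rgt_not_eq, Rdiv_lt_0_compat; lra). field. split; lra.
    + apply filterlim_Rmult_l, filterlim_Rminus.
      * apply filterlim_Rmult; [exact filterlim_id_mul_ln|]. apply filterlim_Rmult_l.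
        eapply filterlim_comp; [apply filterlim_div_at_right_0 | apply continuous_atanc].
      * eapply filterlim_comp; [apply filterlim_div_at_right_0 | apply continuous_Ti2].
  - apply (filterlim_ext_loc
             (fun x => / s * (PI / 2 * ln s - Ti2 (s / x) - ln x / x * (s * atanc (s / x))))).
    + exists 0. intros x Hx.
      assert (Hxs : 0 < x / s) by (apply Rdiv_lt_0_compat; lra).
      assert (Hsx : s / x = / (x / s)) by (field; lra).
      rewrite Hsx, atanc_eq by (apply Rinv_neq_0_compat; lra).
      rewrite atan_inv by exact Hxs.
      generalize (Ti2_inv _ Hxs). rewrite ln_div by lra. intros HT.
      field_simplify_eq; [lra | lra].
    + apply filterlim_Rmult_l, filterlim_Rminus; [apply filterlim_Rminus|].
      * apply filterlim_const.
      * eapply filterlim_comp; [apply filterlim_div_pinfty | apply continuous_Ti2].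
      * apply filterlim_Rmult; [exact is_lim_div_ln_p|]. apply filterlim_Rmult_l.
        eapply filterlim_comp; [apply filterlim_div_pinfty | apply continuous_atanc].
Qed.

Lemma is_RInt_gen_id_mul_ln_mul_kernel_derive n :
  is_RInt_gen
    (fun x => ln x * kernel n s x + kernel n s x
              - 2 * (INR n + 1) * x ^ 2 * ln x * kernel (S n) s x)
    (at_right 0) (Rbar_locally p_infty) 0.
Proof.
  apply (is_RInt_gen_derive_pos_0 (fun x => x * ln x * kernel n s x)).
  - intros x Hx. now apply is_derive_id_mul_ln_mul_kernel.
  - intros x Hx.
    apply (ex_derive_continuous (fun x => ln x * kernel n s x + kernel n s x
                                          - 2 * (INR n + 1) * x ^ 2 * ln x * kernel (S n) s x)).
    apply (ex_derive_minus (fun x => ln x * kernel n s x + kernel n s x)).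
    + apply (ex_derive_plus (fun x => ln x * kernel n s x)); [|apply ex_derive_kernel].
      apply (ex_derive_mult ln (kernel n s)); [auto_derive; exact Hx | apply ex_derive_kernel].
    + apply (ex_derive_mult (fun x => 2 * (INR n + 1) * x ^ 2 * ln x) (kernel (S n) s));
        [auto_derive; exact Hx | apply ex_derive_kernel].
  - apply filterlim_id_mul_ln_mul_kernel_0.
  - apply filterlim_id_mul_ln_mul_kernel_pinfty.
Qed.

Lemma is_RInt_gen_ln_kernel n :
  is_RInt_gen (fun x => ln x * kernel n s x) (at_right 0) (Rbar_locally p_infty)
    (kernel_int n s * (ln s - Odd_harm n)).
Proof.
  induction n as [|n IH].
  - rewrite kernel_int_0. simpl Odd_harm. rewrite Rminus_0_r. apply is_RInt_gen_ln_kernel_0.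
  - set (c := / (2 * (INR n + 1) * s ^ 2)).
    set (L := fun x => ln x * kernel n s x).
    set (d := fun x => L x + kernel n s x - 2 * (INR n + 1) * x ^ 2 * ln x * kernel (S n) s x).
    apply (is_RInt_gen_ext_pos (fun x => c * ((2 * INR n + 1) * L x - kernel n s x + d x))).
    { intros x _. unfold d, L, c. rewrite (kernel_S n x).
      assert (Hn := pos_INR n). field. split; nra. }
    replace (kernel_int (S n) s * (ln s - Odd_harm (S n)))
      with (c * ((2 * INR n + 1) * (kernel_int n s * (ln s - Odd_harm n)) - kernel_int n s + 0)).
    + apply (is_RInt_gen_scal (fun x => (2 * INR n + 1) * L x - kernel n s x + d x)).
      apply (is_RInt_gen_plus (fun x => (2 * INR n + 1) * L x - kernel n s x) d);
        [|apply is_RInt_gen_id_mul_ln_mul_kernel_derive].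
      apply (is_RInt_gen_minus (fun x => (2 * INR n + 1) * L x) (kernel n s));
        [now apply (is_RInt_gen_scal L) | apply is_RInt_gen_kernel].
    + rewrite kernel_int_S, Odd_harm_S. unfold c. assert (Hn := pos_INR n). field. split; nra.
Qed.

End Kernel.

Definition beta : R := (1 - sqrt 5) / 2.

Lemma sqrt5_pos : 0 < sqrt 5.
Proof. apply sqrt_lt_R0. lra. Qed.

Lemma sqrt5_sqr : sqrt 5 * sqrt 5 = 5.
Proof. apply sqrt_sqrt. lra. Qed.

Lemma alpha_pos : 0 < alpha.
Proof. unfold alpha. generalize sqrt5_pos. lra. Qed.

Lemma alpha_mul_beta : alpha * beta = -1.
Proof. unfold alpha, beta. generalize sqrt5_sqr. nra. Qed.

Lemma pow_SS_golden r k : r ^ 2 = r + 1 -> r ^ S (S k) = r ^ S k + r ^ k.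
Proof.
  intros Hr. replace (r ^ S (S k)) with (r ^ 2 * r ^ k) by (simpl; ring).
  rewrite Hr. simpl. ring.
Qed.

Lemma alpha_sqr : alpha ^ 2 = alpha + 1.
Proof. unfold alpha. generalize sqrt5_sqr. simpl. nra. Qed.

Lemma beta_sqr : beta ^ 2 = beta + 1.
Proof. unfold beta. generalize sqrt5_sqr. simpl. nra. Qed.

Lemma lucL_binet k : lucL k = (alpha ^ k + beta ^ k, alpha ^ S k + beta ^ S k).
Proof.
  induction k as [|k IH]; simpl lucL.
  - unfold alpha, beta. f_equal; field.
  - rewrite IH. f_equal. rewrite !(pow_SS_golden _ k) by (apply alpha_sqr || apply beta_sqr). ring.
Qed.

Lemma fibL_binet k :
  fibL k = ((alpha ^ k - beta ^ k) / sqrt 5, (alpha ^ S k - beta ^ S k) / sqrt 5).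
Proof.
  assert (H5 := sqrt5_pos).
  induction k as [|k IH]; simpl fibL.
  - unfold alpha, beta. f_equal; field; lra.
  - rewrite IH. f_equal. rewrite !(pow_SS_golden _ k) by (apply alpha_sqr || apply beta_sqr).
    field. lra.
Qed.

Lemma beta_pow_even k : beta ^ (2 * k) = / alpha ^ (2 * k).
Proof.
  assert (Ha := pow_lt _ (2 * k) alpha_pos).
  apply (Rmult_eq_reg_l (alpha ^ (2 * k))); [|lra].
  rewrite <- Rpow_mult_distr, Rinv_r, pow_mult, alpha_mul_beta by lra.
  replace ((-1) ^ 2) with 1 by ring. apply pow1.
Qed.

Lemma Luc_even_mul k i : Luc (2 * k * i) = (alpha ^ (2 * k)) ^ i + / (alpha ^ (2 * k)) ^ i.
Proof.
  unfold Luc. rewrite lucL_binet, <- Nat.mul_assoc, beta_pow_even, Nat.mul_assoc.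
  now rewrite pow_mult.
Qed.

Lemma Fib_even_mul k i :
  Fib (2 * k * i) = ((alpha ^ (2 * k)) ^ i - / (alpha ^ (2 * k)) ^ i) / sqrt 5.
Proof.
  unfold Fib. rewrite fibL_binet, <- Nat.mul_assoc, beta_pow_even, Nat.mul_assoc.
  now rewrite pow_mult.
Qed.

Lemma alpha_pow_4_mul m : alpha ^ (2 * (2 * m)) = (alpha ^ (2 * m)) ^ 2.
Proof. now rewrite Nat.mul_comm, pow_mult. Qed.

Lemma Luc_binomial_sum m N x :
  sum_f_R0 (fun j => Binomial.C N j * Luc (4 * m * (N - j)) * x ^ (2 * j)) N
  = (x ^ 2 + (alpha ^ (2 * m)) ^ 2) ^ N + (x ^ 2 + / (alpha ^ (2 * m)) ^ 2) ^ N.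
Proof.
  rewrite !binomial, <- plus_sum. apply sum_eq. intros j _.
  replace (4 * m)%nat with (2 * (2 * m))%nat by lia.
  rewrite Luc_even_mul, alpha_pow_4_mul, (pow_mult x 2 j), pow_inv. ring.
Qed.

Lemma Fib_binomial_sum m N x :
  sum_f_R0 (fun j => Binomial.C N j * Fib (4 * m * (N - j)) * x ^ (2 * j)) N
  = / sqrt 5 * (x ^ 2 + (alpha ^ (2 * m)) ^ 2) ^ N
    - / sqrt 5 * (x ^ 2 + / (alpha ^ (2 * m)) ^ 2) ^ N.
Proof.
  rewrite !binomial, !scal_sum, <- minus_sum. apply sum_eq. intros j _.
  replace (4 * m)%nat with (2 * (2 * m))%nat by lia.
  rewrite Fib_even_mul, alpha_pow_4_mul, (pow_mult x 2 j), pow_inv. unfold Rdiv. ring.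
Qed.

Lemma Luc_4 m : Luc (4 * m) = (alpha ^ (2 * m)) ^ 2 + / (alpha ^ (2 * m)) ^ 2.
Proof.
  replace (4 * m)%nat with (2 * (2 * m) * 1)%nat by lia.
  rewrite Luc_even_mul, alpha_pow_4_mul, pow_1. reflexivity.
Qed.

Lemma is_RInt_gen_reciprocal_pair n s u v l : 0 < s ->
  l = - (Binomial.C (2 * n) n * (PI / 2 ^ (2 * n + 1)))
        * ((u * s ^ (2 * n + 1) - v / s ^ (2 * n + 1)) * ln s
           + Odd_harm n * (u * s ^ (2 * n + 1) + v / s ^ (2 * n + 1))) ->
  is_RInt_gen
    (fun x => (u * (x ^ 2 + s ^ 2) ^ S n + v * (x ^ 2 + / s ^ 2) ^ S n)
              / (x ^ 4 + (s ^ 2 + / s ^ 2) * x ^ 2 + 1) ^ S n * ln x)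
    (at_right 0) (Rbar_locally p_infty) l.
Proof.
  intros Hs Hl.
  assert (His : 0 < / s) by now apply Rinv_0_lt_compat.
  apply (is_RInt_gen_ext_pos (fun x => u * (ln x * kernel n (/ s) x) + v * (ln x * kernel n s x))).
  { intros x _. unfold kernel.
    replace (x ^ 4 + (s ^ 2 + / s ^ 2) * x ^ 2 + 1) with ((x ^ 2 + s ^ 2) * (x ^ 2 + / s ^ 2))
      by (field; lra).
    assert (0 < (x ^ 2 + s ^ 2) ^ S n) by apply pow_lt, (kernel_denom_pos s Hs).
    assert (0 < (x ^ 2 + (/ s) ^ 2) ^ S n) by apply pow_lt, (kernel_denom_pos (/ s) His).
    rewrite Rpow_mult_distr, (pow_inv s 2) in *. field. lra. }
  replace l with (u * (kernel_int n (/ s) * (ln (/ s) - Odd_harm n))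
                  + v * (kernel_int n s * (ln s - Odd_harm n))).
  - apply (is_RInt_gen_plus (fun x => u * (ln x * kernel n (/ s) x))
                            (fun x => v * (ln x * kernel n s x))).
    + apply (is_RInt_gen_scal (fun x => ln x * kernel n (/ s) x)), is_RInt_gen_ln_kernel, His.
    + apply (is_RInt_gen_scal (fun x => ln x * kernel n s x)), is_RInt_gen_ln_kernel, Hs.
  - assert (HP : 0 < s ^ (2 * n + 1)) by now apply pow_lt.
    assert (H2 : 0 < 2 ^ (2 * n + 1)) by (apply pow_lt; lra).
    rewrite Hl. unfold kernel_int. rewrite ln_Rinv, pow_inv by exact Hs. field. lra.
Qed.

Theorem theorem26 (m n : nat) (hm : (1 <= m)%nat) :
  is_RInt_gen
    (fun x : R =>
       sum_f_R0 (fun j => Binomial.C (S n) j * Luc (4 * m * (S n - j)) * x ^ (2 * j)) (S n)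
       / (x ^ 4 + Luc (4 * m) * x ^ 2 + 1) ^ (S n) * ln x)
    (at_right 0) (Rbar_locally p_infty)
    (- Binomial.C (2 * n) n * (PI / 2 ^ (2 * n + 1))
       * (2 * INR m * sqrt 5 * Fib (2 * m * (2 * n + 1)) * ln alpha
          + Odd_harm n * Luc (2 * m * (2 * n + 1))))
  /\
  is_RInt_gen
    (fun x : R =>
       sum_f_R0 (fun j => Binomial.C (S n) j * Fib (4 * m * (S n - j)) * x ^ (2 * j)) (S n)
       / (x ^ 4 + Luc (4 * m) * x ^ 2 + 1) ^ (S n) * ln x)
    (at_right 0) (Rbar_locally p_infty)
    (- Binomial.C (2 * n) n * (PI / 2 ^ (2 * n + 1))
       * (2 * INR m / sqrt 5 * Luc (2 * m * (2 * n + 1)) * ln alpha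
          + Odd_harm n * Fib (2 * m * (2 * n + 1)))).
Proof.
  set (s := alpha ^ (2 * m)).
  assert (Hs : 0 < s) by apply pow_lt, alpha_pos.
  assert (HP : 0 < s ^ (2 * n + 1)) by now apply pow_lt.
  assert (H5 := sqrt5_pos).
  assert (H2 : 0 < 2 ^ (2 * n + 1)) by (apply pow_lt; lra).
  assert (Hln : ln s = 2 * INR m * ln alpha).
  { unfold s. rewrite ln_pow, mult_INR by apply alpha_pos. reflexivity. }
  rewrite Luc_even_mul, Fib_even_mul. fold s.
  split.
  - eapply is_RInt_gen_ext_pos; [|apply (is_RInt_gen_reciprocal_pair n s 1 1); [exact Hs|]].
    + intros x _. rewrite Luc_binomial_sum, Luc_4. fold s. do 2 f_equal. ring.
    + rewrite Hln. field. repeat split; lra.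
  - eapply is_RInt_gen_ext_pos;
      [|apply (is_RInt_gen_reciprocal_pair n s (/ sqrt 5) (- / sqrt 5)); [exact Hs|]].
    + intros x _. rewrite Fib_binomial_sum, Luc_4. fold s. do 2 f_equal. ring.
    + rewrite Hln. field. repeat split; lra.
Qed.
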